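(* Let $X$ be a topological space. The following are equivalent: (1) $X$ is nowhere scattered; (2) $X$ has no nonempty, scattered, locally closed subsets; (3) $X$ has no nonempty, locally closed subset that is $T_1$; (4) $X$ has no locally closed subset containing exactly one element.
   Context: A topological space $X$ is nowhere scattered if no closed subset $C\subseteq X$ contains a point that is isolated relative to $C$. A space is scattered if every nonempty closed subset $C$ contains a point isolated relative to $C$. A subset is locally closed if it is relatively open in some closed subset. Subsets carry the subspace topology. *)

(* Subsets of a topological space T are [set T];
   subspace-topology notions are written out explicitly in terms of the
   ambient topology (open sets of the subspace S are S `&` V, V open in T;
   closed sets of S are S `&` F, F closed in T). *)
From HB Require Import structures.
From mathcomp Require Import all_boot all_order.
From mathcomp Require Import all_classical all_reals all_analysis.
Export all_boot all_order all_classical all_reals all_analysis.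

Set Implicit Arguments.
Unset Strict Implicit.
Unset Printing Implicit Defensive.

Local Open Scope classical_set_scope.

Section Defs.
Context {T : topologicalType}.

Definition isolated_in (C : set T) (x : T) : Prop :=
  C x /\ exists U : set T, open U /\ U `&` C = [set x].

Definition nowhere_scattered : Prop :=
  forall C : set T, closed C -> forall x, ~ isolated_in C x.

Definition scattered_subset (S : set T) : Prop :=
  forall F : set T, closed F -> S `&` F !=set0 ->
    exists x, isolated_in (S `&` F) x.

Definition locally_closed (A : set T) : Prop :=
  exists F : set T, closed F /\ A `<=` F /\
    exists U : set T, open U /\ A = U `&` F.

Definition T1_subset (S : set T) : Prop :=
  forall x y, S x -> S y -> x <> y ->
    exists U : set T, open U /\ U x /\ ~ U y.

End Defs.

(* Everything reduces to locally closed singletons: {x} is locally closed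
   exactly when x is isolated in some closed set (namely any closed F in
   which {x} is relatively open).  A nonempty locally closed scattered set
   A = U ∩ F has a point isolated in A, hence in the closed set F.  A
   nonempty locally closed T_1 set A = U ∩ F has closed points, so for a in
   A the singleton {a} = U ∩ (F ∩ cl{a}) is locally closed.  Conversely
   singletons are scattered and T_1. *)
From mathcomp Require Import all_boot all_order.
From mathcomp Require Import all_classical all_reals all_analysis.

Local Open Scope classical_set_scope.

Section LocallyClosedSingletons.
Context {T : topologicalType}.

Lemma locally_closed_set1P (x : T) :
  locally_closed [set x] <-> exists2 C : set T, closed C & isolated_in C x.
Proof.
split.
- move=> [F [cF [sF [U [oU e]]]]]; exists F => //; split; first exact: sF.
  by exists U.
- move=> [C cC [Cx [U [oU UC]]]]; exists C; split => //; split.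
    by move=> z ->.
  by exists U.
Qed.

Lemma scattered_set1 (x : T) : scattered_subset [set x].
Proof.
move=> F cF [y [/= -> Fx]]; exists x; split; first by [].
exists setT; split; first exact: openT.
by apply/seteqP; split => z /=; [move=> [_ [->]] | move=> ->].
Qed.

Lemma T1_set1 (x : T) : T1_subset [set x].
Proof. by move=> a b /= -> ->. Qed.

Lemma scattered_locally_closed_set1 (A : set T) :
  A !=set0 -> scattered_subset A -> locally_closed A ->
  exists x : T, locally_closed [set x].
Proof.
move=> A0 sA [F [cF [sF [U [oU AUF]]]]].
have AF : A `&` F = A := setIidl sF.
have [x [Ax [V [oV VA]]]] : exists x, isolated_in (A `&` F) x.
  by apply: sA cF _; rewrite AF.
rewrite AF in Ax VA.
exists x; apply/locally_closed_set1P; exists F => //; split; first exact: sF.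
exists (V `&` U); split; first exact: openI.
by rewrite -setIA -AUF.
Qed.

Lemma T1_locally_closed_set1 (A : set T) :
  A !=set0 -> locally_closed A -> T1_subset A ->
  exists x : T, locally_closed [set x].
Proof.
move=> [a Aa] [F [cF [sF [U [oU AUF]]]]] t1A; exists a.
exists (F `&` closure [set a]); split; first exact: closedI cF (@closed_closure _ _).
split; first by move=> z /= ->; split; [exact: sF | exact: subset_closure].
exists U; split => //; apply/seteqP; split => z /=.
  move=> ->; have [Ua Fa] : (U `&` F) a by rewrite -AUF.
  by split=> //; split=> //; exact: subset_closure.
move=> [Uz [Fz cl_a_z]]; have Az : A z by rewrite AUF.
apply: contrapT => za.
have [V [oV [Vz Va]]] := t1A z a Az Aa za.
by have [w [/= -> Vw]] := cl_a_z V (open_nbhs_nbhs (conj oV Vz)).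
Qed.

End LocallyClosedSingletons.

Theorem mainTheorem10 (T : topologicalType) :
  [<-> @nowhere_scattered T;
       ~ (exists A : set T, A !=set0 /\ scattered_subset A /\ locally_closed A);
       ~ (exists A : set T, A !=set0 /\ locally_closed A /\ T1_subset A);
       ~ (exists A : set T, locally_closed A /\ exists x : T, A = [set x])].
Proof.
tfae.
- move=> ns [A [A0 [sA lcA]]].
  have [x /locally_closed_set1P [C cC xC]] :=
    scattered_locally_closed_set1 A A0 sA lcA.
  exact: ns xC.
- move=> noScat [A [A0 [lcA t1A]]]; apply: noScat.
  have [x lcx] := T1_locally_closed_set1 A A0 lcA t1A.
  exists [set x]; split; first by exists x.
  by split; [exact: scattered_set1 | exact: lcx].
- move=> noT1 [A [lcA [x eA]]]; subst A; apply: noT1.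
  exists [set x]; split; first by exists x.
  by split; [exact: lcA | exact: T1_set1].
- move=> noSingleton C cC x xC; apply: noSingleton.
  by exists [set x]; split; [apply/locally_closed_set1P; exists C | exists x].
Qed.
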